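(* Let $\mathcal{H}=(V,E)$ be a linear hypergraph such that $\mathrm{ar}(\mathcal{H})\ge |V|^{1/2}$. Then $$\mathrm{q}(\mathcal{H})\le \Delta([\mathcal{H}]_2)+1.$$
   Context: A hypergraph $\mathcal{H}=(V,E)$ has a finite vertex set $V$ and a finite set $E$ of nonempty subsets of $V$ (hyperedges). It is linear if $|e\cap e'|\le 1$ for all distinct $e,e'\in E$. The antirank $\mathrm{ar}(\mathcal{H})$ is the minimum cardinality of a hyperedge (set to $\infty$ if $E=\varnothing$). The 2-section $[\mathcal{H}]_2$ is the simple graph on $V$ in which two distinct vertices are adjacent iff some hyperedge contains both; $\Delta([\mathcal{H}]_2)$ is its maximum degree. The chromatic index $\mathrm{q}(\mathcal{H})$ is the least $k$ such that the hyperedges can be colored with $k$ colors so that any two distinct intersecting hyperedges receive different colors. *)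

From mathcomp Require Import all_boot.
Set Implicit Arguments. Unset Strict Implicit. Unset Printing Implicit Defensive.

Section Hyper.
Variable V : finType.
Implicit Types (E : {set {set V}}).

Definition hyperedges_nonempty E : Prop := forall e, e \in E -> e != set0.

Definition linear_hg E : Prop :=
  forall e e', e \in E -> e' \in E -> e != e' -> #|e :&: e'| <= 1.

Definition adj2 E (u v : V) : bool := (u != v) && [exists e in E, (u \in e) && (v \in e)].
Definition deg2 E (u : V) : nat := #|[set v | adj2 E u v]|.
Definition maxdeg2 E : nat := \max_(u : V) deg2 E u.


Definition colorable E k : bool :=
  [exists c : {ffun {set V} -> 'I_k.+1},
     [forall e in E, c e < k] &&
     [forall e in E, forall e' in E, (e != e') && (e :&: e' != set0) ==> (c e != c e')]].

Lemma colorable_ex E : exists k, colorable E k.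
Proof.
have Hi : forall e, e \in E -> index e (enum E) < #|E|.
  by move=> e He; rewrite cardE index_mem mem_enum.
have Hk : forall e, index e (enum E) <= #|E|.
  by move=> e; rewrite cardE index_size.
exists #|E|; apply/existsP.
exists [ffun e => inord (index e (enum E))]; apply/andP; split.
- apply/forallP=> e; apply/implyP=> He; rewrite ffunE inordK ?Hi //.
  by rewrite ltnS Hk.
- apply/forallP=> e; apply/implyP=> He; apply/forallP=> e'; apply/implyP=> He'.
  apply/implyP=> /andP[ne _]; rewrite !ffunE.
  rewrite -(inj_eq val_inj) /= !inordK ?ltnS ?Hk //.
  apply: contra ne => /eqP Heq; apply/eqP.
  have h1 := nth_index e (s:=enum E); have h2 := nth_index e (s:=enum E).
  by rewrite -(h1 e) ?mem_enum // Heq h2 ?mem_enum.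
Qed.

Definition chromatic_index E : nat := ex_minn (colorable_ex E).

(* antirank >= |V|^(1/2): every hyperedge e has #|e| >= sqrt #|V|, i.e. #|e|^2 >= #|V|
   (vacuous when E is empty, matching ar = oo). *)
Definition antirank_ge_sqrtV E : Prop := forall e, e \in E -> #|V| <= #|e| ^ 2.

End Hyper.

(* Induction on the number of edges. Let e be an edge of minimum size k, F the
   set of the other edges meeting e, and Delta = maxdeg2 E. If #|F| <= Delta,
   colour E minus e and give e a colour missing on F. Otherwise all counts are
   tight. By linearity the edges through a vertex v, minus v, are disjoint parts
   of its neighbourhood, so (k - 1) * #|edges at v| <= deg v <= Delta; summing
   over the k vertices of e, whose other edges cover F, and using #|F| > Delta
   gives Delta >= k^2 - 1 >= #|V| - 1 >= Delta. Hence every vertex of e lies on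
   exactly k + 1 edges, all of size k, and is adjacent to every other vertex.
   As in an affine plane of order k, the edges outside F are then pairwise
   disjoint and F contains two disjoint edges: one colour for the former, one
   for that pair and one for each other edge of F make #|F| <= k^2 = Delta + 1
   colours. *)

From mathcomp Require Import all_boot zify.
Set Implicit Arguments. Unset Strict Implicit. Unset Printing Implicit Defensive.

Lemma leq_card_bigcup (I T : finType) (P : pred I) (F : I -> {set T}) :
  #|\bigcup_(i | P i) F i| <= \sum_(i | P i) #|F i|.
Proof.
elim/big_rec2: _ => [|i n U _ leUn]; first by rewrite cards0.
by rewrite (leq_trans (leq_card_setU (F i) U).1) ?leq_add2l.
Qed.

Lemma card_bigcup_disjoint (I T : finType) (A : {set I}) (F : I -> {set T}) :
  {in A &, forall i j, i != j -> [disjoint F i & F j]} ->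
  #|\bigcup_(i in A) F i| = \sum_(i in A) #|F i|.
Proof.
elim: {A}_.+1 {-2}A (ltnSn #|A|) => // n IH A ltAn dF.
case: (set_0Vmem A) => [->|[a aA]]; first by rewrite !big_set0 cards0.
rewrite (big_setD1 a aA) (big_setD1 a aA) /= -IH; first last.
- by move=> i j /setD1P[_ iA] /setD1P[_ jA]; apply: dF.
- by rewrite (cardsD1 a A) aA in ltAn.
rewrite cardsU disjoint_setI0 ?cards0 ?subn0 //.
by apply: bigcup_disjoint => i /setD1P[ia iA]; apply: dF; rewrite // eq_sym.
Qed.

Lemma sum_eq_bound (I : finType) (A : {set I}) (F : I -> nat) c :
  {in A, forall i, F i <= c} -> #|A| * c <= \sum_(i in A) F i ->
  {in A, forall i, F i = c}.
Proof.
move=> leFc geF.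
have [leFA] := @leqif_sum I (mem A) (fun i => F i == c) F (fun=> c)
  (fun i iA => leqif_eq (leFc i iA)).
by rewrite eqn_leq leFA sum_nat_const geF => /esym/forall_inP eqFc i /eqFc/eqP.
Qed.

Lemma exists_lt_notin (s : seq nat) K : size s < K -> exists2 i, i < K & i \notin s.
Proof.
move=> ltsK; case: (boolP (all (mem s) (iota 0 K))) => [/allP sub | /allPn[i]].
  by have := uniq_leq_size (iota_uniq 0 K) sub; rewrite size_iota leqNgt ltsK.
by rewrite mem_iota => /andP[_ ltiK] nis; exists i.
Qed.

Section Hypergraph.
Variable V : finType.
Implicit Types (E : {set {set V}}) (e f g : {set V}).

Definition edges_at E (p : V) := [set f in E | p \in f].
Definition meeting E e := [set f in E | (f != e) && (f :&: e != set0)].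

Lemma edges_atP E p f : reflect (f \in E /\ p \in f) (f \in edges_at E p).
Proof. by rewrite inE; apply: andP. Qed.

Definition proper_coloring E K (c : {set V} -> nat) : Prop :=
  {in E, forall f, c f < K} /\
  {in E &, forall f g, f != g -> f :&: g != set0 -> c f != c g}.

Lemma colorableP E K : reflect (exists c, proper_coloring E K c) (colorable E K).
Proof.
apply: (iffP existsP) => [[c /andP[/forall_inP ltK /forall_inP propc]]|[c [ltK propc]]].
  exists (fun f => val (c f)); split=> [f /ltK // | f g fE gE fg fg0].
  by have /forall_inP/(_ g gE) := propc f fE; rewrite fg fg0.
have inordE f : f \in E -> (inord (c f) : 'I_K.+1) = c f :> nat.
  by move/ltK/leqW/inordK.
exists [ffun f => inord (c f)]; apply/andP; split; apply/forall_inP => f fE.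
  by rewrite ffunE inordE ?ltK.
apply/forall_inP => g gE; apply/implyP => /andP[fg fg0].
by rewrite !ffunE -(inj_eq val_inj) /= !inordE //; apply: propc.
Qed.

Lemma colorable0 K : colorable (set0 : {set {set V}}) K.
Proof. by apply/colorableP; exists (fun=> 0); split=> f; rewrite inE. Qed.

Lemma colorable_extend E e K :
  e \in E -> colorable (E :\ e) K -> #|meeting E e| < K -> colorable E K.
Proof.
move=> eE /colorableP[c [ltK propc]] ltFK.
have [i ltiK iF] : exists2 i, i < K & i \notin [seq c f | f <- enum (meeting E e)].
  by apply: exists_lt_notin; rewrite size_map -cardE.
have meet_i f : f \in E -> f != e -> f :&: e != set0 -> c f != i.
  move=> fE fe fe0; apply: contraNneq iF => <-.
  by apply: map_f; rewrite mem_enum !inE fE fe.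
apply/colorableP; exists (fun f => if f == e then i else c f).
split=> [f fE | f g fE gE fg fg0].
  by case: eqP => // /eqP fe; apply: ltK; rewrite !inE fe.
case: (eqVneq f e) => [fe|fe]; case: (eqVneq g e) => [ge|ge].
- by rewrite fe ge eqxx in fg.
- by rewrite eq_sym meet_i // -fe setIC.
- by rewrite meet_i // -ge.
- by apply: propc; rewrite ?inE ?fe ?ge.
Qed.

Lemma colorable_matching_pair E R f g K :
  {in E :\: R &, forall x y : {set V}, x != y -> [disjoint x & y]} ->
  f \in R -> g \in R -> f != g -> [disjoint f & g] -> #|R| <= K -> colorable E K.
Proof.
move=> disjM fR gR fg dfg leRK.
pose merge x := if x == g then f else x.
have mergeR x : x \in R -> merge x \in enum (R :\ g).
  by rewrite mem_enum /merge; case: eqP => [_|/eqP xg] xR; rewrite !inE ?fR ?fg ?xg.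
pose c x := if x \in R then (index (merge x) (enum (R :\ g))).+1 else 0.
apply/colorableP; exists c; split=> [x xE | x y xE yE xy xy0]; rewrite /c.
  case: ifP => [xR|_]; apply: leq_trans leRK; last by apply/card_gt0P; exists g.
  by rewrite (cardsD1 g R) gR ltnS cardE index_mem mergeR.
case: ifP => xR; case: ifP => yR //; last first.
  by move: xy0; rewrite setI_eq0; apply: contraNN => _; apply: disjM; rewrite ?inE ?xR ?yR.
rewrite eqSS; apply: contraNN xy0 => /eqP/(index_inj f (mergeR x xR) (mergeR y yR)).
rewrite setI_eq0 /merge; move: xy.
case: (eqVneq x g) => [->|_]; case: (eqVneq y g) => [->|_].
- by [].
- by move=> _ <-; rewrite disjoint_sym.
- by move=> _ ->.
- by move=> /eqP.
Qed.

Lemma hyperedges_nonemptyS E E' :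
  E' \subset E -> hyperedges_nonempty E -> hyperedges_nonempty E'.
Proof. by move=> /subsetP sE NE f /sE; apply: NE. Qed.

Lemma linear_hgS E E' : E' \subset E -> linear_hg E -> linear_hg E'.
Proof. by move=> /subsetP sE L f g /sE fE /sE gE; apply: L. Qed.

Lemma antirank_ge_sqrtVS E E' :
  E' \subset E -> antirank_ge_sqrtV E -> antirank_ge_sqrtV E'.
Proof. by move=> /subsetP sE AR f /sE; apply: AR. Qed.

Lemma deg2_le_maxdeg2 E p : deg2 E p <= maxdeg2 E.
Proof. exact: leq_bigmax. Qed.

Lemma maxdeg2S E E' : E' \subset E -> maxdeg2 E' <= maxdeg2 E.
Proof.
move=> /subsetP sE; apply/bigmax_leqP => p _; apply: leq_trans (deg2_le_maxdeg2 E p).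
apply/subset_leq_card/subsetP => u; rewrite !inE /adj2 => /andP[-> /exists_inP[f fE pu]].
by apply/exists_inP; exists f; rewrite ?sE.
Qed.

Lemma deg2_le_pred E p : deg2 E p <= #|V|.-1.
Proof.
rewrite -(cardsC1 p); apply/subset_leq_card/subsetP => u.
by rewrite !inE /adj2 eq_sym => /andP[].
Qed.

Lemma maxdeg2_le_pred E : maxdeg2 E <= #|V|.-1.
Proof. by apply/bigmax_leqP => p _; apply: deg2_le_pred. Qed.

Lemma adj2_deg2_full E p w : deg2 E p = #|V|.-1 -> w != p -> adj2 E p w.
Proof.
move=> degp wp; have sub : [set u | adj2 E p u] \subset [set~ p].
  by apply/subsetP => u; rewrite !inE /adj2 eq_sym => /andP[].
have /subset_cardP/(_ sub)/(_ w) : #|[set u | adj2 E p u]| = #|[set~ p]|.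
  by rewrite cardsC1 -degp.
by rewrite !inE wp.
Qed.

Section Linear.
Variable E : {set {set V}}.
Hypothesis linE : linear_hg E.

Lemma linear_hg_eq f g u v : f \in E -> g \in E ->
  u \in f -> v \in f -> u \in g -> v \in g -> u != v -> f = g.
Proof.
move=> fE gE uf vf ug vg uv; apply/eqP; apply: contraT => fg.
have : [set u; v] \subset f :&: g by apply/subsetP => x /set2P[]->; rewrite inE ?uf ?ug ?vf ?vg.
by move/subset_leq_card; rewrite cards2 uv => /leq_trans/(_ (linE fE gE fg)).
Qed.

Lemma disjoint_edges_at p :
  {in edges_at E p &, forall f g, f != g -> [disjoint f :\ p & g :\ p]}.
Proof.
move=> f g /edges_atP[fE pf] /edges_atP[gE pg] fg.
rewrite -setI_eq0; apply/set0Pn => -[u]; rewrite !inE => /andP[/andP[up uf] /andP[_ ug]].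
by move/negP: fg; apply; apply/eqP; apply: (linear_hg_eq fE gE uf pf ug pg).
Qed.

Lemma sum_card_edges_at p : \sum_(f in edges_at E p) #|f :\ p| <= deg2 E p.
Proof.
rewrite -card_bigcup_disjoint; last exact: disjoint_edges_at.
apply/subset_leq_card/bigcupsP => f /edges_atP[fE pf].
apply/subsetP => u /setD1P[up uf]; rewrite inE /adj2 eq_sym up.
by apply/exists_inP; exists f; rewrite ?pf.
Qed.

Lemma card_edges_at_meeting p (S : {set V}) :
  p \notin S -> #|[set f in edges_at E p | f :&: S != set0]| <= #|S|.
Proof.
move=> pS; set A := [set f in _ | _].
have AD : A \subset edges_at E p by apply/subsetP => f; rewrite inE => /andP[].
apply: (@leq_trans (\sum_(f in A) #|f :&: S|)).
  by rewrite -sum1_card; apply: leq_sum => f; rewrite inE card_gt0 => /andP[].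
rewrite -card_bigcup_disjoint; first by apply/subset_leq_card/bigcupsP => f _; apply: subsetIr.
move=> f g /(subsetP AD) fp /(subsetP AD) gp /(disjoint_edges_at fp gp).
have sub h : h :&: S \subset h :\ p.
  by apply/subsetP => u; rewrite !inE => /andP[-> uS]; rewrite andbT; apply: contraNneq pS => <-.
by move/(disjointWl (sub f))/(disjointWr (sub g)).
Qed.

End Linear.

Section MinimumEdge.
Variables (E : {set {set V}}) (e : {set V}).
Hypotheses (nonemptyE : hyperedges_nonempty E) (linE : linear_hg E)
  (arE : antirank_ge_sqrtV E) (eE : e \in E) (e_min : {in E, forall f, #|e| <= #|f|}).

Local Notation k := #|e|.

Lemma card_edges_at_deg2 p : k.-1 * #|edges_at E p| <= deg2 E p.
Proof.
apply: leq_trans (sum_card_edges_at linE p).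
rewrite mulnC -sum_nat_const; apply: leq_sum => f /edges_atP[fE pf].
by have := e_min fE; rewrite (cardsD1 p f) pf; lia.
Qed.

Lemma card_edges_atD1 v : v \in e -> #|edges_at E v| = (#|edges_at E v :\ e|).+1.
Proof. by move=> ve; rewrite (cardsD1 e) inE eE ve. Qed.

Lemma card_meeting_le_sum : #|meeting E e| <= \sum_(v in e) #|edges_at E v :\ e|.
Proof.
apply: leq_trans (leq_card_bigcup _ _); apply/subset_leq_card/subsetP => f.
rewrite inE => /andP[fE /andP[fe /set0Pn[v]]]; rewrite inE => /andP[vf ve].
by apply/bigcupP; exists v => //; rewrite !inE fe fE vf.
Qed.

Hypothesis meeting_gt : maxdeg2 E < #|meeting E e|.

Lemma card_min_edge_gt1 : 1 < k.
Proof.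
rewrite ltnNge; apply/negP => le_k1.
have fullV f : f \in E -> f = setT.
  move=> fE; apply/eqP; rewrite eqEcard subsetT cardsT (leq_trans (arE eE)) //.
  by apply: leq_trans (e_min fE); case: #|e| le_k1 => [|[]].
have := meeting_gt; rewrite (_ : meeting E e = set0) ?cards0 //.
apply/setP => f; rewrite !inE; apply/negP => /andP[fE /andP[fe _]].
by rewrite (fullV f fE) (fullV e eE) eqxx in fe.
Qed.

Lemma maxdeg2_min_edge : (maxdeg2 E).+1 = k ^ 2.
Proof.
have sum_le : \sum_(v in e) (k.-1 * #|edges_at E v :\ e| + k.-1) <= k * maxdeg2 E.
  rewrite -sum_nat_const; apply: leq_sum => v ve.
  by rewrite -mulnSr -card_edges_atD1 // (leq_trans (card_edges_at_deg2 v)) ?deg2_le_maxdeg2.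
rewrite big_split /= -big_distrr sum_nat_const /= in sum_le.
have sum_gt : (maxdeg2 E).+1 <= \sum_(v in e) #|edges_at E v :\ e|.
  exact: leq_trans meeting_gt card_meeting_le_sum.
have := leq_mul (leqnn k.-1) sum_gt; have := maxdeg2_le_pred E; have := arE eE.
move: sum_le card_min_edge_gt1; case: #|e| => [|[|m]] //= *; nia.
Qed.

Lemma card_V_min_edge : #|V| = k ^ 2.
Proof.
have := maxdeg2_le_pred E; have := arE eE; have := maxdeg2_min_edge.
move: card_min_edge_gt1; case: #|e| => [|[|m]] //= *; nia.
Qed.

Lemma card_edges_at_le p : #|edges_at E p| <= k.+1.
Proof.
have := leq_trans (card_edges_at_deg2 p) (deg2_le_maxdeg2 E p).
have := maxdeg2_min_edge; move: card_min_edge_gt1; case: #|e| => [|[|m]] //= *; nia.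
Qed.

Lemma card_edges_at_min_edge v : v \in e -> #|edges_at E v| = k.+1.
Proof.
have le_k u : u \in e -> #|edges_at E u :\ e| <= k.
  by move=> ue; have := card_edges_at_le u; rewrite card_edges_atD1.
move=> ve; rewrite card_edges_atD1 // (sum_eq_bound le_k) // mulnn -maxdeg2_min_edge.
exact: leq_trans meeting_gt card_meeting_le_sum.
Qed.

Lemma adj2_min_edge v w : v \in e -> w != v -> adj2 E v w.
Proof.
move=> ve; apply: adj2_deg2_full; apply/eqP; rewrite eqn_leq deg2_le_pred /=.
have := card_edges_at_deg2 v; rewrite card_edges_at_min_edge // card_V_min_edge.
move: card_min_edge_gt1; case: #|e| => [|[|m]] //= *; nia.
Qed.

Lemma card_edge_le_min_edge v g : v \in e -> g \in edges_at E v -> #|g| <= k.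
Proof.
move=> ve gv; have /edges_atP[_ vg] := gv.
have rest : k * k.-1 <= \sum_(f in edges_at E v :\ g) #|f :\ v|.
  have cardDg : #|edges_at E v :\ g| = k.
    by move: (cardsD1 g (edges_at E v)); rewrite gv card_edges_at_min_edge // => -[->].
  rewrite -{1}cardDg -sum_nat_const; apply: leq_sum => f /setD1P[_ /edges_atP[fE vf]].
  by have := e_min fE; rewrite (cardsD1 v f) vf; lia.
have := sum_card_edges_at linE v; rewrite (big_setD1 g gv) /=.
move/(leq_trans (leq_add (leqnn _) rest))/leq_trans/(_ (deg2_le_pred E v)).
rewrite card_V_min_edge (cardsD1 v g) vg; move: card_min_edge_gt1.
case: #|e| => [|[|m]] // *; nia.
Qed.

Lemma card_edges_at_meeting_ge w :
  w \notin e -> k <= #|[set f in edges_at E w | f :&: e != set0]|.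
Proof.
move=> we; set A := [set f in _ | _].
have cover : e \subset \bigcup_(f in A) (f :&: e).
  apply/subsetP => v ve; have wv : w != v by apply: contraNneq we => ->.
  have /andP[_ /exists_inP[f fE /andP[vf wf]]] := adj2_min_edge ve wv.
  apply/bigcupP; exists f; last by rewrite inE vf ve.
  by rewrite !inE fE wf; apply/set0Pn; exists v; rewrite inE vf ve.
apply: leq_trans (subset_leq_card cover) _; apply: leq_trans (leq_card_bigcup _ _) _.
rewrite -sum1_card; apply: leq_sum => f; rewrite !inE => /andP[/andP[fE wf] _].
by apply: linE => //; apply: contraNneq we => <-.
Qed.

(* Two edges missing e and sharing a vertex w would put at least k + 2 edges
   through w: k through the points of e, and these two. *)
Lemma disjoint_outside_meeting :
  {in E :\: meeting E e &, forall f g : {set V}, f != g -> [disjoint f & g]}.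
Proof.
have apart f : f \in E :\: meeting E e -> f != e -> [disjoint f & e].
  by rewrite !inE => /andP[nM fE] fe; move: nM; rewrite fE fe /= negbK setI_eq0.
move=> f g fM gM fg.
case: (eqVneq f e) => [fe|fe]; first by rewrite disjoint_sym fe apart // -fe eq_sym.
case: (eqVneq g e) => [ge|ge]; first by rewrite ge apart.
rewrite -setI_eq0; apply/set0Pn => -[w /setIP[wf wg]].
have we : w \notin e by rewrite (disjointFr (apart f fM fe) wf).
have fgD : [set f; g] \subset edges_at E w.
  case/setDP: fM => fE _; case/setDP: gM => gE _.
  by apply/subsetP => h /set2P[]->; rewrite inE ?fE ?gE.
have sub : [set h in edges_at E w | h :&: e != set0] \subset edges_at E w :\: [set f; g].
  apply/subsetP => h; rewrite !inE => /andP[-> he]; rewrite andbT.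
  by apply/norP; split; apply: contraNneq he => ->; rewrite setI_eq0 apart.
have := subset_leq_card sub; rewrite cardsD (setIidPr fgD) cards2 fg.
have := card_edges_at_meeting_ge we; have := card_edges_at_le w; have := card_min_edge_gt1.
lia.
Qed.

(* The k edges through v0 other than e meet g :\ v2 in disjoint sets, and
   #|g :\ v2| < k. *)
Lemma exists_edge_at_disjoint v0 v2 g : v0 \in e -> v2 \in e -> v0 != v2 ->
  g \in edges_at E v2 :\ e -> exists2 f, f \in edges_at E v0 :\ e & [disjoint f & g].
Proof.
move=> v0e v2e v02 gD; have [ge gv2] := setD1P gD.
have /edges_atP[gE v2g] := gv2.
have v0g : v0 \notin g.
  by apply: contra ge => v0g; rewrite (linear_hg_eq linE gE eE v0g v2g v0e v2e v02).
have v0S : v0 \notin g :\ v2 by rewrite inE negb_and v0g orbT.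
have /subsetPn[f fD fA] :
    ~~ (edges_at E v0 :\ e \subset [set f in edges_at E v0 | f :&: (g :\ v2) != set0]).
  apply: contraTN (card_edges_at_meeting linE v0S) => /subset_leq_card; rewrite -ltnNge.
  have := card_edge_le_min_edge v2e gv2; rewrite (cardsD1 v2 g) v2g /=.
  have := card_edges_at_min_edge v0e; rewrite card_edges_atD1 // => -[-> le_g].
  by move/(leq_trans le_g).
exists f => //; have [fe fv0] := setD1P fD.
have /edges_atP[fE v0f] := fv0.
have v2f : v2 \notin f.
  by apply: contra fe => v2f; rewrite (linear_hg_eq linE fE eE v0f v2f v0e v2e v02).
move: fA; rewrite inE fv0 /= negbK => /eqP fg2.
rewrite -setI_eq0 -subset0 -fg2; apply/subsetP => u; rewrite !inE => /andP[uf ug].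
by rewrite uf ug andbT; apply: contraNneq v2f => <-.
Qed.

Lemma exists_disjoint_meeting_pair :
  exists f g, [/\ f \in meeting E e, g \in meeting E e, f != g & [disjoint f & g]].
Proof.
have /set0Pn[v0 v0e] := nonemptyE eE.
have /card_gt0P[v2] : 0 < #|e :\ v0| by move: card_min_edge_gt1; rewrite (cardsD1 v0 e) v0e.
case/setD1P => v20 v2e.
have /card_gt0P[g gD] : 0 < #|edges_at E v2 :\ e|.
  move: (card_edges_at_min_edge v2e); rewrite card_edges_atD1 // => -[->].
  exact: ltnW card_min_edge_gt1.
have v02 : v0 != v2 by rewrite eq_sym.
have [f fD dfg] := exists_edge_at_disjoint v0e v2e v02 gD.
have [[fe fv0] [ge gv2]] := (setD1P fD, setD1P gD).
have inM h u : h \in edges_at E u -> h != e -> u \in e -> h \in meeting E e.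
  move=> /edges_atP[hE uh] he ue; rewrite !inE hE he; apply/set0Pn; exists u.
  by rewrite inE uh ue.
exists f, g; split; [exact: inM fv0 fe v0e | exact: inM gv2 ge v2e | | by []].
have /edges_atP[_ v2g] := gv2.
apply: contraTneq dfg => ->; rewrite -setI_eq0 setIid.
by apply/set0Pn; exists v2.
Qed.

Lemma colorable_min_edge K : maxdeg2 E < K -> colorable E K.
Proof.
move=> ltDK; have [f [g [fM gM fg dfg]]] := exists_disjoint_meeting_pair.
apply: (colorable_matching_pair disjoint_outside_meeting fM gM fg dfg).
apply: leq_trans card_meeting_le_sum _.
rewrite (eq_bigr (fun=> k)) => [|v ve]; last first.
  by move: (card_edges_at_min_edge ve); rewrite card_edges_atD1 // => -[].
by rewrite sum_nat_const mulnn -maxdeg2_min_edge.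
Qed.

End MinimumEdge.

Lemma colorable_gt_maxdeg2 E K :
  hyperedges_nonempty E -> linear_hg E -> antirank_ge_sqrtV E ->
  maxdeg2 E < K -> colorable E K.
Proof.
elim: {E}_.+1 {-2}E (ltnSn #|E|) => // n IH E ltEn nonemptyE linE arE ltDK.
case: (set_0Vmem E) => [->|[f fE]]; first exact: colorable0.
have [e eE e_min] := arg_minnP (fun f : {set V} => #|f|) fE; have {}eE : e \in E := eE.
have [le_meeting|gt_meeting] := leqP #|meeting E e| (maxdeg2 E); last first.
  exact: colorable_min_edge nonemptyE linE arE eE e_min gt_meeting K ltDK.
have subE := subD1set E e.
apply: (colorable_extend eE _ (leq_ltn_trans le_meeting ltDK)); apply: IH.
- by move: ltEn; rewrite (cardsD1 e E) eE.
- exact: hyperedges_nonemptyS nonemptyE.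
- exact: linear_hgS linE.
- exact: antirank_ge_sqrtVS arE.
- exact: leq_ltn_trans (maxdeg2S subE) ltDK.
Qed.

End Hypergraph.

Unset Implicit Arguments.

Theorem theorem1p6 (V : finType) (E : {set {set V}}) :
  hyperedges_nonempty E -> linear_hg E -> antirank_ge_sqrtV E ->
  chromatic_index E <= maxdeg2 E + 1.
Proof.
move=> nonemptyE linE arE; rewrite /chromatic_index; case: ex_minnP => m _ m_min.
by apply: m_min; apply: colorable_gt_maxdeg2; rewrite ?addn1.
Qed.
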